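(* Let $(X,\Sigma,\mu)$ be a complete $\sigma$-finite measure space, $\mathcal{A}\subseteq\Sigma$ a sub-$\sigma$-finite algebra, $E=E^{\mathcal{A}}$ the associated conditional expectation, and $u\in\mathcal{D}(E)$ such that $T=EM_u$ is a bounded operator on $L^2(\Sigma)$. For $\lambda\in\mathbb{C}$ let $A_\lambda=\{x\in X: E(u)(x)=\lambda\}$. Then: (a) $\sigma_p(EM_u)\setminus\{0\}=\{\lambda\in\mathbb{C}\setminus\{0\}:\mu(A_\lambda)>0\}$. (b) $\{\lambda\in\mathbb{C}:\mu(A_\lambda)>0\}\subseteq\sigma_p(EM_u)$. (c) If $\mu(\{x\in X: E(u)(x)=0\})>0$, then $\{\lambda\in\mathbb{C}:\mu(A_\lambda)>0\}=\sigma_p(EM_u)$.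
   Context: For a sub-$\sigma$-finite algebra $\mathcal{A}\subseteq\Sigma$, $E=E^{\mathcal{A}}$ denotes the conditional expectation: for $f\geq 0$ measurable or $f\in L^2(\Sigma)$, $Ef$ is the unique $\mathcal{A}$-measurable function with $\int_A f\,d\mu=\int_A Ef\,d\mu$ for all $A\in\mathcal{A}$. $\mathcal{D}(E)=\{g\in L^0(\Sigma): E(|g|)\in L^0(\mathcal{A})\}$, where $L^0$ denotes a.e. finite measurable functions. $EM_u f=E(uf)$. $\sigma_p(T)$ is the point spectrum: the set of $\lambda\in\mathbb{C}$ for which there is a unit vector $x$ with $(T-\lambda)x=0$. *)

From HB Require Import structures.
From mathcomp Require Import all_boot all_order all_algebra.
From mathcomp Require Import all_classical all_reals all_analysis.
From mathcomp Require Import measurable_realfun lebesgue_measure lebesgue_integral.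
From mathcomp Require Import complex.
Set Implicit Arguments. Unset Strict Implicit. Unset Printing Implicit Defensive.
Import Order.TTheory GRing.Theory Num.Theory.
Local Open Scope classical_set_scope.
Local Open Scope ring_scope.

Section CondExpDefs.
Context d (X : measurableType d) (R : realType).
Variable mu : {measure set X -> \bar R}.

Definition sub_sigma_finite_algebra (calA : set (set X)) : Prop :=
  [/\ sigma_algebra setT calA, calA `<=` measurable &
      exists F : (set X)^nat,
        (forall n, calA (F n) /\ (mu (F n) < +oo)%E) /\ \bigcup_n F n = setT].

Definition Ameasurable_e (calA : set (set X)) (g : X -> \bar R) : Prop :=
  forall B : set (\bar R), measurable B -> calA (g @^-1` B).

(* g is (a version of) E^calA f for a nonnegative measurable f *)
Definition cexp_nonneg (calA : set (set X)) (f g : X -> \bar R) : Prop :=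
  [/\ forall x, (0 <= g x)%E, Ameasurable_e calA g &
      forall S, calA S -> (\int[mu]_(x in S) f x = \int[mu]_(x in S) g x)%E].

Definition csq (z : R[i]) : R := (complex.Re z) ^+ 2 + (complex.Im z) ^+ 2.
Definition cabs (z : R[i]) : R := Num.sqrt (csq z).

Definition cmeasurable (f : X -> R[i]) : Prop :=
  measurable_fun setT (fun x => complex.Re (f x)) /\
  measurable_fun setT (fun x => complex.Im (f x)).

Definition in_DE (calA : set (set X)) (f : X -> R[i]) : Prop :=
  cmeasurable f /\
  exists g, cexp_nonneg calA (fun x => (cabs (f x))%:E) g /\
            {ae mu, forall x, (g x < +oo)%E}.

Definition cexp (calA : set (set X)) (f g : X -> R[i]) : Prop :=
  exists g1 g2 g3 g4 : X -> \bar R,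
    [/\ cexp_nonneg calA (fun x => (Num.max (complex.Re (f x)) 0)%:E) g1,
        cexp_nonneg calA (fun x => (Num.max (- complex.Re (f x)) 0)%:E) g2,
        cexp_nonneg calA (fun x => (Num.max (complex.Im (f x)) 0)%:E) g3,
        cexp_nonneg calA (fun x => (Num.max (- complex.Im (f x)) 0)%:E) g4 &
        forall x, g x = complex.Complex (fine (g1 x) - fine (g2 x)) (fine (g3 x) - fine (g4 x))].

Definition norm2sq (f : X -> R[i]) : \bar R := (\int[mu]_x (csq (f x))%:E)%E.

Definition inL2 (f : X -> R[i]) : Prop := cmeasurable f /\ (norm2sq f < +oo)%E.

Definition EMu_bounded (calA : set (set X)) (u : X -> R[i]) : Prop :=
  exists C : R, forall f, inL2 f ->
    in_DE calA (fun x => u x * f x) /\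
    forall g, cexp calA (fun x => u x * f x) g ->
      inL2 g /\ (norm2sq g <= (C ^+ 2)%:E * norm2sq f)%E.

Definition point_spectrum (calA : set (set X)) (u : X -> R[i]) : set R[i] :=
  [set lam | exists f, [/\ inL2 f, norm2sq f = 1%E &
     exists g, cexp calA (fun x => u x * f x) g /\
               {ae mu, forall x, g x = lam * f x}]].

Definition level_set (Eu : X -> R[i]) (lam : R[i]) : set X := [set x | Eu x = lam].

End CondExpDefs.

From HB Require Import structures.
From mathcomp Require Import all_boot all_order all_algebra.
From mathcomp Require Import all_classical all_reals all_analysis.
From mathcomp Require Import measurable_realfun lebesgue_measure lebesgue_integral.
From mathcomp Require Import complex.
From mathcomp Require Import ring lra.
Import Order.TTheory GRing.Theory Num.Theory.
Local Open Scope classical_set_scope.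
Local Open Scope ring_scope.
Set Implicit Arguments. Unset Strict Implicit. Unset Printing Implicit Defensive.

(* If E(u f) = lam f with lam <> 0, then f agrees a.e. with the A-measurable
   function h = lam^-1 E(u f).  On an A-set S of finite measure on which E(u)
   and E|u| are bounded and h is within δ of a constant, the pull-out identity
   E(u h) = h E(u) holds up to an error of order δ μ(S); since E(u h) = lam h,
   the integral of (E(u) - lam) h over S is O(δ μ(S)).  If in addition one
   coordinate of (E(u) - lam) h keeps a sign and stays c away from 0 on S, and
   δ is small compared with c, this forces μ(S) = 0.  Countably many such sets
   cover {h <> 0} outside A_lam and the null set {E|u| = +oo}, so f vanishes
   a.e. off A_lam and μ(A_lam) > 0.  Conversely, a normalised indicator 1_B of
   an A-set B of finite positive measure inside A_lam is an eigenfunction,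
   since E(u 1_B) = 1_B E(u) = lam 1_B. *)

Section complex_parts.
Variable R : realType.
Implicit Types z w : R[i].

Lemma cReM z w :
  complex.Re (z * w) = complex.Re z * complex.Re w - complex.Im z * complex.Im w.
Proof. by case: z => a b; case: w. Qed.

Lemma cImM z w :
  complex.Im (z * w) = complex.Re z * complex.Im w + complex.Im z * complex.Re w.
Proof. by case: z => a b; case: w. Qed.

Lemma cReB z w : complex.Re (z - w) = complex.Re z - complex.Re w.
Proof. by case: z; case: w. Qed.

Lemma cImB z w : complex.Im (z - w) = complex.Im z - complex.Im w.
Proof. by case: z; case: w. Qed.

Lemma cReMr z (r : R) : complex.Re (z * Complex r 0) = complex.Re z * r.
Proof. by case: z => a b /=; rewrite mulr0 subr0. Qed.

Lemma cImMr z (r : R) : complex.Im (z * Complex r 0) = complex.Im z * r.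
Proof. by case: z => a b /=; rewrite mulr0 add0r. Qed.

Lemma complex_eq z w :
  complex.Re z = complex.Re w -> complex.Im z = complex.Im w -> z = w.
Proof. by case: z; case: w => a1 b1 a2 b2 /= -> ->. Qed.

Lemma normr_Re_le_cabs z : `|complex.Re z| <= cabs z.
Proof. by rewrite /cabs /csq -sqrtr_sqr ler_wsqrtr // lerDl sqr_ge0. Qed.

Lemma normr_Im_le_cabs z : `|complex.Im z| <= cabs z.
Proof. by rewrite /cabs /csq -sqrtr_sqr ler_wsqrtr // lerDr sqr_ge0. Qed.

End complex_parts.

Section complex_measurable.
Context d (T : measurableType d) (R : realType).
Implicit Types f g : T -> R[i].

Lemma cmeasurable_cst (z : R[i]) : cmeasurable (fun _ : T => z).
Proof. by split; exact: measurable_cst. Qed.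

Lemma cmeasurableB f g : cmeasurable f -> cmeasurable g -> cmeasurable (fun x => f x - g x).
Proof.
move=> [mfr mfi] [mgr mgi]; split.
  rewrite (_ : (fun x => _) = fun x => complex.Re (f x) - complex.Re (g x)).
    exact: measurable_funB.
  by apply/funext => x; rewrite cReB.
rewrite (_ : (fun x => _) = fun x => complex.Im (f x) - complex.Im (g x)).
  exact: measurable_funB.
by apply/funext => x; rewrite cImB.
Qed.

Lemma cmeasurableM f g : cmeasurable f -> cmeasurable g -> cmeasurable (fun x => f x * g x).
Proof.
move=> [mfr mfi] [mgr mgi]; split.
  rewrite (_ : (fun x => _) = fun x =>
      complex.Re (f x) * complex.Re (g x) - complex.Im (f x) * complex.Im (g x)).
    by apply: measurable_funB; exact: measurable_funM.
  by apply/funext => x; rewrite cReM.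
rewrite (_ : (fun x => _) = fun x =>
    complex.Re (f x) * complex.Im (g x) + complex.Im (f x) * complex.Re (g x)).
  by apply: measurable_funD; exact: measurable_funM.
by apply/funext => x; rewrite cImM.
Qed.

End complex_measurable.

Lemma measurable_set_bool d (T : measurableType d) (b : T -> bool) :
  measurable_fun setT b -> measurable [set x | b x].
Proof.
move=> mb; have := mb measurableT [set true] I; rewrite setTI.
by congr measurable; apply/seteqP; split=> x /=.
Qed.

Section sub_sigma_algebra.
Context d (X : measurableType d) (R : realType) (calA : set (set X)).
Hypothesis calA_sigma : sigma_algebra setT calA.
Hypothesis calA_sub : calA `<=` measurable.
Local Notation XA := (g_sigma_algebraType calA).

Lemma gmeasurableE (S : set X) : measurable (S : set XA) = calA S.
Proof. by rewrite measurable_g_measurableTypeE. Qed.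

Lemma measurable_fun_gsigma d' (T : sigmaRingType d') (f : XA -> T) :
  measurable_fun setT f -> measurable_fun (setT : set X) (f : X -> T).
Proof.
move=> mf _ B mB; rewrite setTI; apply: calA_sub.
by have := mf measurableT B mB; rewrite setTI gmeasurableE.
Qed.

Lemma Ameasurable_eP (g : X -> \bar R) :
  Ameasurable_e calA g <-> measurable_fun (setT : set XA) (g : XA -> \bar R).
Proof.
split=> [Ag _ B mB|mg B mB]; first by rewrite setTI gmeasurableE; exact: Ag.
by have := mg measurableT B mB; rewrite setTI gmeasurableE.
Qed.

Lemma measurable_fineB (q1 q2 : X -> \bar R) :
  Ameasurable_e calA q1 -> Ameasurable_e calA q2 ->
  measurable_fun (setT : set XA) (fun x => fine (q1 x) - fine (q2 x)).
Proof.
by move=> /Ameasurable_eP mq1 /Ameasurable_eP mq2; apply: measurable_funB;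
  exact: measurableT_comp.
Qed.

End sub_sigma_algebra.

Section Rintegrable.
Context d (X : measurableType d) (R : realType) (mu : {measure set X -> \bar R}).
Variable S : set X.
Hypothesis mS : measurable S.
Local Notation Rint f := (mu.-integrable S (EFin \o f)).

Lemma RintegrableD (f g : X -> R) : Rint f -> Rint g -> Rint (fun x => f x + g x).
Proof.
move=> hf hg; have := integrableD mS hf hg.
by apply: eq_integrable => // x _ /=; rewrite EFinD.
Qed.

Lemma RintegrableB (f g : X -> R) : Rint f -> Rint g -> Rint (fun x => f x - g x).
Proof.
move=> hf hg; have := integrableB mS hf hg.
by apply: eq_integrable => // x _ /=; rewrite EFinB.
Qed.

Lemma RintegrableZl k (f : X -> R) : Rint f -> Rint (fun x => k * f x).
Proof.
move=> hf; have := integrableZl mS k hf.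
by apply: eq_integrable => // x _ /=; rewrite EFinM.
Qed.

Lemma Rintegrable_dominated (f g : X -> R) : measurable_fun setT f ->
  (forall x, S x -> `|f x| <= g x) -> Rint g -> Rint f.
Proof.
move=> mf fg ig; apply: (le_integrable mS _ _ ig).
  by apply/measurable_EFinP; exact: measurable_funTS.
by move=> x Sx /=; rewrite lee_fin (le_trans (fg x Sx)) // ler_norm.
Qed.

Hypothesis finS : (mu S < +oo)%E.

Lemma Rintegrable_bounded (f : X -> R) C : measurable_fun setT f ->
  (forall x, S x -> `|f x| <= C) -> Rint f.
Proof.
move=> mf fC; apply: (Rintegrable_dominated (g := cst C)) => //.
apply/integrableP; split; first by apply/measurable_EFinP; exact: measurable_cst.
rewrite (_ : (fun x => _) = cst `|C|%:E); last by apply/funext.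
by rewrite integral_cst //= lte_mul_pinfty.
Qed.

Lemma normr_Rintegral_le_bound (f : X -> R) C : measurable_fun setT f ->
  (forall x, S x -> `|f x| <= C) -> `|\int[mu]_(x in S) f x| <= C * fine (mu S).
Proof.
move=> mf fC; rewrite (le_trans (le_normr_Rintegral mS (Rintegrable_bounded mf fC))) //.
rewrite -Rintegral_cst // le_Rintegral //.
- exact: integrable_norm (Rintegrable_bounded mf fC).
- by apply: (Rintegrable_bounded (C := `|C|)) => //; exact: measurable_cst.
Qed.

(* Writing [h = a + (h - a)], the [a]-parts of the two integrals cancel. *)
Lemma Rintegral_mul_near_cst (e v h : X -> R) (a δ M K : R) : 0 <= δ ->
  measurable_fun setT e -> measurable_fun setT v -> measurable_fun setT h ->
  (forall x, S x -> `|e x| <= M) -> Rint v ->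
  (forall x, S x -> `|h x - a| <= δ) ->
  \int[mu]_(x in S) e x = \int[mu]_(x in S) v x ->
  \int[mu]_(x in S) `|v x| <= K ->
  [/\ Rint (fun x => e x * h x), Rint (fun x => v x * h x) &
   `|\int[mu]_(x in S) (e x * h x) - \int[mu]_(x in S) (v x * h x)|
      <= δ * (M * fine (mu S) + K)].
Proof.
move=> d0 me mv mh eM iv ha Eev vK.
have ie : Rint e := Rintegrable_bounded me eM.
have mha : measurable_fun setT (fun x => h x - a).
  exact: measurable_funB mh (measurable_cst a).
have eaM x : S x -> `|e x * (h x - a)| <= M * δ.
  by move=> Sx; rewrite normrM ler_pM // ?eM ?ha.
have va x : S x -> `|v x * (h x - a)| <= δ * `|v x|.
  by move=> Sx; rewrite normrM mulrC ler_wpM2r // ha.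
have iea : Rint (fun x => e x * (h x - a)).
  exact: Rintegrable_bounded (measurable_funM me mha) eaM.
have iva : Rint (fun x => v x * (h x - a)).
  exact: Rintegrable_dominated (measurable_funM mv mha) va
    (RintegrableZl δ (integrable_norm iv)).
have split_mul (f : X -> R) x : f x * h x = a * f x + f x * (h x - a) by ring.
have ieh : Rint (fun x => e x * h x).
  apply: eq_integrable (RintegrableD (RintegrableZl a ie) iea) => // x _.
  by rewrite /= split_mul.
have ivh : Rint (fun x => v x * h x).
  apply: eq_integrable (RintegrableD (RintegrableZl a iv) iva) => // x _.
  by rewrite /= split_mul.
split => //.
under eq_Rintegral do rewrite split_mul.
under [X in _ - X]eq_Rintegral do rewrite split_mul.
rewrite !RintegralD ?RintegralZl //; try exact: RintegrableZl.
have addrKB (p q r : R) : p + q - (p + r) = q - r by ring.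
rewrite Eev addrKB (le_trans (ler_normB _ _)) // mulrDr lerD //.
  by rewrite mulrA (mulrC δ); exact: normr_Rintegral_le_bound (measurable_funM me mha) eaM.
rewrite (le_trans (le_normr_Rintegral mS iva)) //.
rewrite (le_trans (le_Rintegral mS (integrable_norm iva) _ va)) //.
  exact: RintegrableZl (integrable_norm iv).
by rewrite RintegralZl ?ler_wpM2l //; exact: integrable_norm.
Qed.

Lemma measure0_of_Rintegral_small (W : X -> R) c e : 0 <= e -> e < c -> Rint W ->
  `|\int[mu]_(x in S) W x| <= e * fine (mu S) ->
  ((forall x, S x -> c <= W x) \/ (forall x, S x -> W x <= - c)) -> mu S = 0%E.
Proof.
move=> e0 ec IW hW hc.
have cst_int r : Rint (cst r).
  by apply: (Rintegrable_bounded (C := `|r|)) => //; exact: measurable_cst.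
have H : c * fine (mu S) <= `|\int[mu]_(x in S) W x|.
  case: hc => hc.
    by rewrite -Rintegral_cst // (le_trans _ (ler_norm _)) //;
      apply: le_Rintegral => //; exact: cst_int.
  rewrite ler_normr; apply/orP; right; rewrite lerNr -mulNr -Rintegral_cst //.
  by apply: le_Rintegral => //; exact: cst_int.
have f0 : 0 <= fine (mu S) by rewrite fine_ge0 // measure_ge0.
suff f00 : fine (mu S) = 0.
  by rewrite -[mu S]fineK ?f00 // ge0_fin_numE // measure_ge0.
apply/eqP; rewrite eq_le f0 andbT.
have : (c - e) * fine (mu S) <= 0 by rewrite mulrBl subr_le0 (le_trans H).
by rewrite pmulr_rle0 // subr_gt0.
Qed.

End Rintegrable.

Lemma Rintegrable_ae_eq d (X : measurableType d) (R : realType)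
    (mu : {measure set X -> \bar R}) (S : set X) (f g : X -> R) : measurable S ->
  measurable_fun setT f -> measurable_fun setT g ->
  {ae mu, forall x, f x = g x} -> mu.-integrable S (EFin \o g) ->
  mu.-integrable S (EFin \o f) /\ \int[mu]_(x in S) f x = \int[mu]_(x in S) g x.
Proof.
move=> mS mf mg ae ig.
have mfS : measurable_fun S (EFin \o f) by apply/measurable_EFinP; exact: measurable_funTS.
have mgS : measurable_fun S (EFin \o g) by apply/measurable_EFinP; exact: measurable_funTS.
have aeS : ae_eq mu S (EFin \o f) (EFin \o g) by apply: filterS ae => x /= -> _.
split; last by rewrite /Rintegral; congr fine; exact: ae_eq_integral.
apply/integrableP; split => //; move/integrableP: ig => [_]; apply: le_lt_trans.
rewrite le_eqVlt; apply/orP; left; apply/eqP; apply: ae_eq_integral => //.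
- exact: measurableT_comp.
- exact: measurableT_comp.
- by apply: filterS ae => x /= -> _.
Qed.

Lemma fine_EFinM (R : realType) (r : R) (y : \bar R) : fine (r%:E * y)%E = r * fine y.
Proof.
case: y => [s||] //=.
  by rewrite mulry; case: sgrP => _; rewrite ?mul0e ?mul1e ?mulN1e /= ?mulr0.
by rewrite mulrNy; case: sgrP => _; rewrite ?mul0e ?mul1e ?mulN1e /= ?mulr0.
Qed.

Section indicator_integrals.
Context d (X : measurableType d) (R : realType) (mu : {measure set X -> \bar R}).

Lemma integral_indic_scale (S B : set X) (k : R) (h : X -> \bar R) :
  measurable S -> measurable B -> 0 <= k ->
  measurable_fun setT h -> (forall x, 0 <= h x)%E ->
  (\int[mu]_(x in S) ((k * \1_B x)%:E * h x) = k%:E * \int[mu]_(x in S `&` B) h x)%E.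
Proof.
move=> mS mB k0 mh h0.
under eq_integral do rewrite EFinM -muleA.
have mIh : measurable_fun S (fun x => (\1_B x)%:E * h x)%E.
  apply: measurable_funTS; apply: emeasurable_funM => //.
  by apply/measurable_EFinP; exact: measurable_indic.
rewrite (ge0_integralZl mu mS mIh) ?lee_fin //; last first.
  by move=> x _; rewrite mule_ge0 // lee_fin.
congr (_ * _)%E; rewrite integral_mkcondr; apply: eq_integral => x _.
by rewrite /patch indicE; case: (x \in B) => /=; rewrite ?mul1e ?mul0e.
Qed.

Lemma norm2sq_scale_indic (k : R) (B : set X) : measurable B ->
  norm2sq mu (fun x => Complex (k * \1_B x) 0) = ((k ^+ 2)%:E * mu B)%E.
Proof.
move=> mB; rewrite /norm2sq /csq /=.
transitivity (\int[mu]_x ((k ^+ 2 * \1_B x)%:E * cst 1%E x))%E.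
  apply: eq_integral => x _; rewrite /= indicE mule1.
  by case: (x \in B); rewrite /= ?mulr1 ?mulr0 expr0n /= addr0 // expr1n mulr1.
rewrite integral_indic_scale ?sqr_ge0 //; first by rewrite setTI integral_cst // mul1e.
all: first [exact: measurable_cst | by move=> x; rewrite lee01].
Qed.

End indicator_integrals.

Section conditional_expectation.
Context d (X : measurableType d) (R : realType) (mu : {measure set X -> \bar R}).
Variable calA : set (set X).
Hypothesis calA_sigma : sigma_algebra setT calA.
Hypothesis calA_sub : calA `<=` measurable.
Local Notation XA := (g_sigma_algebraType calA).
Local Notation Rint S f := (mu.-integrable S (EFin \o f)).

Lemma cexp_nonneg_measurable (p q : X -> \bar R) : cexp_nonneg mu calA p q ->
  measurable_fun setT q.
Proof.
by case=> _ /(Ameasurable_eP calA_sigma) qA _;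
  exact: (measurable_fun_gsigma calA_sigma calA_sub qA).
Qed.

Lemma cexp_nonneg_integral_fine (p q : X -> \bar R) S :
  cexp_nonneg mu calA p q -> calA S -> (\int[mu]_(x in S) p x < +oo)%E ->
  Rint S (fine \o q) /\ (\int[mu]_(x in S) (fine (q x))%:E = \int[mu]_(x in S) p x)%E.
Proof.
move=> pq AS pfin; have [q0 _ qint] := pq.
have mS := calA_sub AS; have mq := cexp_nonneg_measurable pq.
have iq : mu.-integrable S q.
  apply/integrableP; split; first exact: measurable_funTS.
  by under eq_integral do rewrite gee0_abs//; rewrite -qint.
have mfq : measurable_fun S (EFin \o (fine \o q)).
  by apply: measurable_funTS; apply/measurable_EFinP; exact: measurableT_comp.
split.
  apply: (le_integrable mS mfq _ iq) => x _ /=.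
  by case: (q x) => [r| |] //=; rewrite ?lexx ?normr0 ?leey.
rewrite qint //; apply: ae_eq_integral => //; first exact: measurable_funTS.
by apply: filterS (integrable_ae mS iq) => x H Sx; rewrite /= fineK //; exact: H.
Qed.

Lemma Rintegral_cexp_parts (p : X -> R) q1 q2 S : measurable_fun setT p ->
  cexp_nonneg mu calA (fun x => (Num.max (p x) 0)%:E) q1 ->
  cexp_nonneg mu calA (fun x => (Num.max (- p x) 0)%:E) q2 ->
  calA S -> Rint S p ->
  \int[mu]_(x in S) p x = \int[mu]_(x in S) (fine (q1 x) - fine (q2 x)).
Proof.
move=> mp c1 c2 AS ip; have mS := calA_sub AS.
have e1 : (fun x => (Num.max (p x) 0)%:E) = (EFin \o p)^\+%E.
  by apply/funext => x; rewrite funeposE /= EFin_max.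
have e2 : (fun x => (Num.max (- p x) 0)%:E) = (EFin \o p)^\-%E.
  by apply/funext => x; rewrite funenegE /= EFin_max EFinN.
have f1 : (\int[mu]_(x in S) (Num.max (p x) 0)%:E < +oo)%E.
  rewrite e1; have := integrable_pos_fin_num mS ip.
  by rewrite ge0_fin_numE // integral_ge0 // => x _; exact: funepos_ge0.
have f2 : (\int[mu]_(x in S) (Num.max (- p x) 0)%:E < +oo)%E.
  rewrite e2; have := integrable_neg_fin_num mS ip.
  by rewrite ge0_fin_numE // integral_ge0 // => x _; exact: funeneg_ge0.
have [i1 q1e] := cexp_nonneg_integral_fine c1 AS f1.
have [i2 q2e] := cexp_nonneg_integral_fine c2 AS f2.
rewrite /Rintegral; congr fine.
under [RHS]eq_integral do rewrite EFinB.
by rewrite integralB_EFin // q1e q2e e1 e2; exact: integralE.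
Qed.

Lemma cexp_measurable (f g : X -> R[i]) : cexp mu calA f g -> cmeasurable (g : XA -> R[i]).
Proof.
move=> [g1 [g2 [g3 [g4 [[_ A1 _] [_ A2 _] [_ A3 _] [_ A4 _] Eg]]]]].
rewrite /cmeasurable (funext Eg) /=.
by split; [exact: (measurable_fineB calA_sigma A1 A2)|
  exact: (measurable_fineB calA_sigma A3 A4)].
Qed.

Lemma Rintegral_cexp (f g : X -> R[i]) S : cmeasurable f -> cexp mu calA f g ->
  calA S -> Rint S (fun x => complex.Re (f x)) -> Rint S (fun x => complex.Im (f x)) ->
  \int[mu]_(x in S) complex.Re (f x) = \int[mu]_(x in S) complex.Re (g x) /\
  \int[mu]_(x in S) complex.Im (f x) = \int[mu]_(x in S) complex.Im (g x).
Proof.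
move=> [mfr mfi] [g1 [g2 [g3 [g4 [c1 c2 c3 c4 Eg]]]]] AS ir ii.
rewrite (funext Eg) /=.
by split; apply: Rintegral_cexp_parts.
Qed.

Lemma level_set_calA (f g : X -> R[i]) lam : cexp mu calA f g ->
  calA (level_set g lam).
Proof.
move=> /cexp_measurable[mgr mgi].
have -> : level_set g lam =
    [set x | (complex.Re (g x) == complex.Re lam) && (complex.Im (g x) == complex.Im lam)].
  apply/seteqP; split=> x /=; first by move=> ->; rewrite !eqxx.
  by move=> /andP[/eqP h1 /eqP h2]; apply: complex_eq.
rewrite -gmeasurableE //; apply: (measurable_set_bool (T := XA)).
by apply: measurable_and; apply: measurable_fun_eqr => //; exact: measurable_cst.
Qed.

Lemma Rintegral_le_cexp_bound (p : X -> R) q S M :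
  cexp_nonneg mu calA (fun x => (p x)%:E) q -> measurable_fun setT p ->
  (forall x, 0 <= p x) -> calA S -> (mu S < +oo)%E -> (forall x, S x -> q x <= M%:E)%E ->
  Rint S p /\ \int[mu]_(x in S) p x <= M * fine (mu S).
Proof.
move=> pq mp p0 AS fS qM; have mS := calA_sub AS; have [q0 _ qint] := pq.
have qS : (\int[mu]_(x in S) q x <= (M * fine (mu S))%:E)%E.
  apply: (@le_trans _ _ (\int[mu]_(x in S) (cst M%:E) x)%E).
    apply: ge0_le_integral => //; first exact: measurable_funTS (cexp_nonneg_measurable pq).
  by rewrite integral_cst // EFinM fineK // ge0_fin_numE // measure_ge0.
have ip : Rint S p.
  apply/integrableP; split; first by apply/measurable_EFinP; exact: measurable_funTS.
  under eq_integral do rewrite gee0_abs ?lee_fin //.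
  by rewrite qint // (le_lt_trans qS) // ltry.
split => //; rewrite -lee_fin /Rintegral fineK; first by rewrite qint.
exact: integrable_fin_num.
Qed.

Lemma cexp_nonneg_scale_indic (p : X -> R) q B (k : R) :
  cexp_nonneg mu calA (fun x => (p x)%:E) q -> calA B -> 0 <= k ->
  (forall x, 0 <= p x) -> measurable_fun setT p ->
  cexp_nonneg mu calA (fun x => (k * \1_B x * p x)%:E) (fun x => (k * \1_B x)%:E * q x)%E.
Proof.
move=> pq AB k0 p0 mp; have [q0 qA qint] := pq.
have mB : measurable (B : set XA) by rewrite gmeasurableE.
have mq := cexp_nonneg_measurable pq.
split.
- by move=> x; apply: mule_ge0; rewrite ?lee_fin ?mulr_ge0.
- apply/(Ameasurable_eP calA_sigma); apply: emeasurable_funM.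
    apply/measurable_EFinP; apply: measurable_funM; first exact: measurable_cst.
    exact: measurable_indic.
  exact/(Ameasurable_eP calA_sigma).
- move=> S AS.
  have ASB : calA (S `&` B).
    by rewrite -gmeasurableE //; apply: measurableI; rewrite gmeasurableE.
  under eq_integral do rewrite EFinM.
  rewrite !integral_indic_scale ?qint //; try exact: calA_sub.
  by apply/measurable_EFinP.
Qed.

Lemma cexp_scale_indic (u Eu : X -> R[i]) B k : cmeasurable u -> cexp mu calA u Eu ->
  calA B -> 0 <= k ->
  cexp mu calA (fun x => u x * Complex (k * \1_B x) 0)
               (fun x => Complex (k * \1_B x) 0 * Eu x).
Proof.
move=> [mur mui] [e1 [e2 [e3 [e4 [c1 c2 c3 c4 Ee]]]]] AB k0.
have s0 x : 0 <= k * \1_B x by rewrite mulr_ge0 // indicE ler0n.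
have scale_part (p P : X -> R) q : measurable_fun setT p ->
    cexp_nonneg mu calA (fun x => (Num.max (p x) 0)%:E) q ->
    (forall x, P x = p x * (k * \1_B x)) ->
    cexp_nonneg mu calA (fun x => (Num.max (P x) 0)%:E) (fun x => (k * \1_B x)%:E * q x)%E.
  move=> mp pq PE; rewrite (_ : (fun x => _) =
      (fun x => (k * \1_B x * Num.max (p x) 0)%:E)); last first.
    by apply/funext => x; rewrite PE maxr_pMr // mulr0 mulrC.
  apply: cexp_nonneg_scale_indic => //; first by move=> x; rewrite le_max lexx orbT.
  by apply: measurable_maxr => //; exact: measurable_cst.
exists (fun x => (k * \1_B x)%:E * e1 x)%E, (fun x => (k * \1_B x)%:E * e2 x)%E,
  (fun x => (k * \1_B x)%:E * e3 x)%E, (fun x => (k * \1_B x)%:E * e4 x)%E.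
split.
- by apply: (scale_part _ _ _ mur c1) => x /=; rewrite cReMr.
- apply: (scale_part _ _ _ (measurable_funN mur) c2) => x /=.
  by rewrite cReMr mulNr.
- by apply: (scale_part _ _ _ mui c3) => x /=; rewrite cImMr.
- apply: (scale_part _ _ _ (measurable_funN mui) c4) => x /=.
  by rewrite cImMr mulNr.
- move=> x; rewrite !fine_EFinM Ee.
  by apply: complex_eq; rewrite ?cReM ?cImM /=; ring.
Qed.

End conditional_expectation.

Lemma measure_bigcup_gt0 d (X : measurableType d) (R : realType)
    (mu : {measure set X -> \bar R}) (A : set X) (B : (set X)^nat) :
  measurable A -> (forall n, measurable (B n)) -> A `<=` \bigcup_n B n ->
  (0 < mu A)%E -> exists n, (0 < mu (A `&` B n))%E.
Proof.
move=> mA mB AB A0; apply: contrapT => /forallNP AB0.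
have AB_null n : mu.-negligible (A `&` B n).
  exists (A `&` B n); split => //; first exact: measurableI.
  by apply/eqP; move/negP: (AB0 n); rewrite lt_neqAle measure_ge0 andbT negbK eq_sym.
have [C [mC C0 sC]] := negligible_bigcup AB_null.
have : (mu A <= mu C)%E.
  apply: le_measure; rewrite ?inE // => x Ax.
  by apply: sC; have [n _ Bnx] := AB x Ax; exists n.
by rewrite C0 => /(lt_le_trans A0); rewrite ltxx.
Qed.

Section level_sets_are_eigenvalues.
Context d (X : measurableType d) (R : realType) (mu : {measure set X -> \bar R}).
Variable calA : set (set X).
Hypothesis calA_ssf : sub_sigma_finite_algebra mu calA.

Lemma calA_finite_subset_gt0 (L : set X) : calA L -> (0 < mu L)%E ->
  exists B, [/\ calA B, B `<=` L, (0 < mu B)%E & (mu B < +oo)%E].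
Proof.
have [calA_sigma calA_sub [F [HF coverF]]] := calA_ssf.
move=> AL L0; have mF n : measurable (F n) := calA_sub _ (HF n).1.
have LF : L `<=` \bigcup_n F n by rewrite coverF.
have [n Ln] := measure_bigcup_gt0 (calA_sub _ AL) mF LF L0.
exists (L `&` F n); split => //.
- rewrite -(gmeasurableE calA_sigma); apply: measurableI;
  by rewrite !gmeasurableE //; exact: (HF n).1.
- apply: le_lt_trans (HF n).2; apply: le_measure; rewrite ?inE.
  + exact: measurableI (calA_sub _ AL) (mF n).
  + exact: mF.
  + exact: subIsetr.
Qed.

Lemma level_set_point_spectrum (u Eu : X -> R[i]) lam :
  cmeasurable u -> cexp mu calA u Eu ->
  (0 < mu (level_set Eu lam))%E -> point_spectrum mu calA u lam.
Proof.
have [calA_sigma calA_sub _] := calA_ssf.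
move=> mu_ Eexp L0.
have AL : calA (level_set Eu lam) := level_set_calA calA_sigma lam Eexp.
have [B [AB BL B0 Bfin]] := calA_finite_subset_gt0 AL L0.
have mB := calA_sub _ AB.
have m0 : 0 < fine (mu B) by apply: fine_gt0; rewrite B0 Bfin.
pose c := (Num.sqrt (fine (mu B)))^-1.
have c0 : 0 <= c by rewrite invr_ge0 sqrtr_ge0.
exists (fun x => Complex (c * \1_B x) 0); split.
- split; last by rewrite norm2sq_scale_indic // ltey_eq fin_numM // fin_numElt Bfin
    (lt_le_trans _ (measure_ge0 mu B)).
  split; last exact: measurable_cst.
  by apply: measurable_funM; [exact: measurable_cst|exact: measurable_indic].
- rewrite norm2sq_scale_indic // -[mu B]fineK ?ge0_fin_numE ?measure_ge0 // -EFinM.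
  by rewrite /c exprVn sqr_sqrtr ?mulVf ?gt_eqF // ltW.
- exists (fun x => Complex (c * \1_B x) 0 * Eu x); split.
    exact: cexp_scale_indic.
  apply: aeW => x; rewrite indicE; have [xB|xB] := boolP (x \in B).
    by rewrite (BL x (set_mem xB)) mulrC.
  by rewrite mulr0 (_ : Complex 0 0 = 0) // mul0r mulr0.
Qed.

End level_sets_are_eigenvalues.

Lemma mulrn4_div_lt (R : realFieldType) (c M : R) : 0 < c -> 0 <= M ->
  M * (c / (4 * M + 1)) *+ 4 < c.
Proof.
move=> c0 M0; have A0 : 0 < 4 * M + 1 by lra.
rewrite -mulr_natr (_ : M * (c / (4 * M + 1)) * 4%:R = (4 * M * c) / (4 * M + 1)).
  by rewrite ltr_pdivrMr //; nra.
by field; rewrite gt_eqF.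
Qed.

Lemma exists_inv_succ_le_norm (R : realType) (w : R) : w != 0 ->
  exists m : nat, ((m.+1%:R)^-1 <= w) \/ (w <= - (m.+1%:R)^-1).
Proof.
move=> w0; have aw : 0 < `|w| by rewrite normr_gt0.
exists (Num.truncn (`|w|^-1)).
have h := real_truncnS_gt (num_real (`|w|^-1)).
set k := (Num.truncn _).+1%:R in h *.
have k0 : 0 < k by apply: lt_trans h; rewrite invr_gt0.
have hk : k^-1 < `|w| by rewrite -[X in _ < X]invrK ltf_pV2 ?posrE ?invr_gt0.
have [w_ge0|w_lt0] := leP 0 w.
  by left; rewrite ltW // -(ger0_norm w_ge0).
by right; rewrite lerNr ltW // -(ltr0_norm w_lt0).
Qed.

Lemma exists_grid_cell (R : realType) (y M δ : R) : 0 < δ -> 0 <= y + M ->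
  exists i : nat, - M + i%:R * δ <= y <= - M + i%:R * δ + δ.
Proof.
move=> d0 h; exists (Num.truncn ((y + M) / δ)).
have /andP[h1 h2] := truncn_itv (divr_ge0 h (ltW d0)).
rewrite ler_pdivlMr // in h1; rewrite ltr_pdivrMr // -natr1 mulrDl mul1r in h2.
apply/andP; split; lra.
Qed.

Section eigenvalue_level_set.
Context d (X : measurableType d) (R : realType) (mu : {measure set X -> \bar R}).
Variable calA : set (set X).
Hypothesis calA_sigma : sigma_algebra setT calA.
Hypothesis calA_sub : calA `<=` measurable.
Variables (u Eu : X -> R[i]) (kk : X -> \bar R).
Hypothesis mu_ : cmeasurable u.
Hypothesis kk_cexp : cexp_nonneg mu calA (fun x => (cabs (u x))%:E) kk.
Hypothesis Eu_cexp : cexp mu calA u Eu.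
Variables (lam : R[i]) (f G : X -> R[i]).
Hypothesis lam0 : lam != 0.
Hypothesis mf : cmeasurable f.
Hypothesis G_cexp : cexp mu calA (fun x => u x * f x) G.
Hypothesis G_ae : {ae mu, forall x, G x = lam * f x}.
Hypothesis kk_fin : {ae mu, forall x, (kk x < +oo)%E}.
Variable F : (set X)^nat.
Hypothesis calA_F : forall n, calA (F n).
Hypothesis finite_F : forall n, (mu (F n) < +oo)%E.
Hypothesis cover_F : \bigcup_n F n = setT.

Local Notation XA := (g_sigma_algebraType calA).
Local Notation Rint S g := (mu.-integrable S (EFin \o g)).

(* [h = lam^-1 E(u f)] is an [A]-measurable version of [f]. *)
Let h x := lam^-1 * G x.
Let W x := (Eu x - lam) * h x.
Let ur x : R := complex.Re (u x).
Let ui x : R := complex.Im (u x).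
Let ER x : R := complex.Re (Eu x).
Let EI x : R := complex.Im (Eu x).
Let hr x : R := complex.Re (h x).
Let hi x : R := complex.Im (h x).
Let WR x : R := complex.Re (W x).
Let WI x : R := complex.Im (W x).
Let lr : R := complex.Re lam.
Let li : R := complex.Im lam.

Let G_h x : G x = lam * h x.
Proof. by rewrite /h mulrA mulfV // mul1r. Qed.

Let f_ae_h : {ae mu, forall x, f x = h x}.
Proof. by apply: filterS G_ae => x Gx; rewrite /h Gx mulrA mulVf // mul1r. Qed.

Let Eu_measurable : cmeasurable (Eu : XA -> R[i]).
Proof. exact: cexp_measurable Eu_cexp. Qed.

Let h_measurable : cmeasurable (h : XA -> R[i]).
Proof. by apply: cmeasurableM; [exact: cmeasurable_cst|exact: cexp_measurable G_cexp]. Qed.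

Let W_measurable : cmeasurable (W : XA -> R[i]).
Proof.
apply: cmeasurableM h_measurable; apply: cmeasurableB Eu_measurable _.
exact: cmeasurable_cst.
Qed.

Let measurableX (g : XA -> R) : measurable_fun setT g -> measurable_fun (setT : set X) g.
Proof. exact: measurable_fun_gsigma. Qed.

Lemma Rintegral_uh S : calA S ->
  Rint S (fun x => ur x * hr x) -> Rint S (fun x => ui x * hi x) ->
  Rint S (fun x => ur x * hi x) -> Rint S (fun x => ui x * hr x) ->
  \int[mu]_(x in S) (ur x * hr x - ui x * hi x) = \int[mu]_(x in S) (lr * hr x - li * hi x) /\
  \int[mu]_(x in S) (ur x * hi x + ui x * hr x) = \int[mu]_(x in S) (lr * hi x + li * hr x).
Proof.
move=> AS i1 i2 i3 i4; have mS := calA_sub AS.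
have [muf_r muf_i] : cmeasurable (fun x => u x * f x) := cmeasurableM mu_ mf.
have [mur mui] := mu_; have [mhr mhi] := h_measurable.
have [mhrX mhiX] := (measurableX mhr, measurableX mhi).
have aeR : {ae mu, forall x, complex.Re (u x * f x) = ur x * hr x - ui x * hi x}.
  by apply: filterS f_ae_h => x ->; rewrite cReM.
have aeI : {ae mu, forall x, complex.Im (u x * f x) = ur x * hi x + ui x * hr x}.
  by apply: filterS f_ae_h => x ->; rewrite cImM.
have [iR int_Re] := Rintegrable_ae_eq mS muf_r
  (measurable_funB (measurable_funM mur mhrX) (measurable_funM mui mhiX)) aeR
  (RintegrableB mS i1 i2).
have [iI int_Im] := Rintegrable_ae_eq mS muf_i
  (measurable_funD (measurable_funM mur mhiX) (measurable_funM mui mhrX)) aeI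
  (RintegrableD mS i3 i4).
have [EGr EGi] := Rintegral_cexp calA_sigma calA_sub (cmeasurableM mu_ mf) G_cexp AS iR iI.
split.
  by rewrite -int_Re EGr; apply: eq_Rintegral => x _; rewrite G_h cReM.
by rewrite -int_Im EGi; apply: eq_Rintegral => x _; rewrite G_h cImM.
Qed.

Lemma u_integrable_on S M : calA S -> (mu S < +oo)%E ->
  (forall x, S x -> (kk x <= M%:E)%E) ->
  [/\ Rint S ur, Rint S ui, \int[mu]_(x in S) `|ur x| <= M * fine (mu S) &
      \int[mu]_(x in S) `|ui x| <= M * fine (mu S)].
Proof.
move=> AS fS kM; have mS := calA_sub AS; have [mur mui] := mu_.
have mcabs : measurable_fun setT (fun x => cabs (u x)).
  apply: measurableT_comp; first exact: continuous_measurable_fun (@sqrt_continuous R).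
  by apply: measurable_funD; exact: measurable_funX.
have [icabs cabsM] := Rintegral_le_cexp_bound calA_sigma calA_sub kk_cexp mcabs
  (fun x => sqrtr_ge0 _) AS fS kM.
have iur : Rint S ur.
  by apply: (Rintegrable_dominated mS mur _ icabs) => x _; exact: normr_Re_le_cabs.
have iui : Rint S ui.
  by apply: (Rintegrable_dominated mS mui _ icabs) => x _; exact: normr_Im_le_cabs.
split => //; apply: le_trans cabsM; apply: le_Rintegral => //.
- exact: integrable_norm.
- by move=> x _; exact: normr_Re_le_cabs.
- exact: integrable_norm.
- by move=> x _; exact: normr_Im_le_cabs.
Qed.

Lemma pullout_box S M δ (p : X -> R) c : calA S -> (mu S < +oo)%E -> 0 <= δ ->
  (forall x, S x -> [/\ (kk x <= M%:E)%E, `|ER x| <= M & `|EI x| <= M]) ->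
  measurable_fun setT p -> (forall x, S x -> `|p x - c| <= δ) ->
  [/\ Rint S (fun x => ER x * p x), Rint S (fun x => EI x * p x),
      Rint S (fun x => ur x * p x), Rint S (fun x => ui x * p x) &
      `|\int[mu]_(x in S) (ER x * p x) - \int[mu]_(x in S) (ur x * p x)|
        <= M * δ *+ 2 * fine (mu S) /\
      `|\int[mu]_(x in S) (EI x * p x) - \int[mu]_(x in S) (ui x * p x)|
        <= M * δ *+ 2 * fine (mu S)].
Proof.
move=> AS fS d0 bS mp pc; have mS := calA_sub AS.
have kM x : S x -> (kk x <= M%:E)%E by case/bS.
have ERM x : S x -> `|ER x| <= M by case/bS.
have EIM x : S x -> `|EI x| <= M by case/bS.
have [iur iui urM uiM] := u_integrable_on AS fS kM.
have [Eur Eui] := Rintegral_cexp calA_sigma calA_sub mu_ Eu_cexp AS iur iui.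
have [mER mEI] := Eu_measurable; have [mur mui] := mu_.
have [i1 j1 b1] := Rintegral_mul_near_cst mS fS d0 (measurableX mER) mur mp ERM iur pc
  (esym Eur) urM.
have [i2 j2 b2] := Rintegral_mul_near_cst mS fS d0 (measurableX mEI) mui mp EIM iui pc
  (esym Eui) uiM.
have -> : M * δ *+ 2 * fine (mu S) = δ * (M * fine (mu S) + M * fine (mu S)) by ring.
by split.
Qed.

Let in_box S M δ a b := forall x, S x ->
  [/\ (kk x <= M%:E)%E, `|ER x| <= M, `|EI x| <= M, `|hr x - a| <= δ & `|hi x - b| <= δ].

Let near_bounded (p : X -> R) c δ S : (forall x, S x -> `|p x - c| <= δ) ->
  forall x, S x -> `|p x| <= `|c| + δ.
Proof.
move=> pc x Sx; rewrite -[p x](subrK c) (le_trans (ler_normD _ _)) //.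
by rewrite addrC lerD2l pc.
Qed.

Lemma Rintegral_WR_small S M δ a b : calA S -> (mu S < +oo)%E -> 0 <= δ ->
  in_box S M δ a b -> Rint S WR /\ `|\int[mu]_(x in S) WR x| <= M * δ *+ 4 * fine (mu S).
Proof.
move=> AS fS d0 box; have mS := calA_sub AS.
have bnd x : S x -> [/\ (kk x <= M%:E)%E, `|ER x| <= M & `|EI x| <= M] by case/box.
have ha x : S x -> `|hr x - a| <= δ by case/box.
have hb x : S x -> `|hi x - b| <= δ by case/box.
have [mhr mhi] := h_measurable.
have [iEr _ irr iir [br _]] := pullout_box (p := hr) AS fS d0 bnd (measurableX mhr) ha.
have [_ iEi iri iii [_ bi]] := pullout_box (p := hi) AS fS d0 bnd (measurableX mhi) hb.
have [Euh _] := Rintegral_uh AS irr iii iri iir.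
have ihr : Rint S hr := Rintegrable_bounded mS fS (measurableX mhr) (near_bounded ha).
have ihi : Rint S hi := Rintegrable_bounded mS fS (measurableX mhi) (near_bounded hb).
have ilh := RintegrableB mS (RintegrableZl mS lr ihr) (RintegrableZl mS li ihi).
have WRE : WR = (fun x => (ER x * hr x - EI x * hi x) - (lr * hr x - li * hi x)).
  by apply/funext => x; rewrite /WR /W cReM cReB cImB; ring.
rewrite WRE; split; first exact: (RintegrableB mS (RintegrableB mS iEr iEi) ilh).
rewrite (RintegralB mS (RintegrableB mS iEr iEi) ilh) (RintegralB mS iEr iEi).
rewrite -Euh (RintegralB mS irr iii).
have -> : M * δ *+ 4 * fine (mu S) = M * δ *+ 2 * fine (mu S) + M * δ *+ 2 * fine (mu S).
  by ring.
rewrite (_ : forall p q r s : R, p - q - (r - s) = (p - r) - (q - s)); last by move=> *; ring.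
by rewrite (le_trans (ler_normB _ _)) // lerD.
Qed.

Lemma Rintegral_WI_small S M δ a b : calA S -> (mu S < +oo)%E -> 0 <= δ ->
  in_box S M δ a b -> Rint S WI /\ `|\int[mu]_(x in S) WI x| <= M * δ *+ 4 * fine (mu S).
Proof.
move=> AS fS d0 box; have mS := calA_sub AS.
have bnd x : S x -> [/\ (kk x <= M%:E)%E, `|ER x| <= M & `|EI x| <= M] by case/box.
have ha x : S x -> `|hr x - a| <= δ by case/box.
have hb x : S x -> `|hi x - b| <= δ by case/box.
have [mhr mhi] := h_measurable.
have [_ iEr irr iir [_ br]] := pullout_box (p := hr) AS fS d0 bnd (measurableX mhr) ha.
have [iEi _ iri iii [bi _]] := pullout_box (p := hi) AS fS d0 bnd (measurableX mhi) hb.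
have [_ Euh] := Rintegral_uh AS irr iii iri iir.
have ihr : Rint S hr := Rintegrable_bounded mS fS (measurableX mhr) (near_bounded ha).
have ihi : Rint S hi := Rintegrable_bounded mS fS (measurableX mhi) (near_bounded hb).
have ilh := RintegrableD mS (RintegrableZl mS lr ihi) (RintegrableZl mS li ihr).
have WIE : WI = (fun x => (ER x * hi x + EI x * hr x) - (lr * hi x + li * hr x)).
  by apply/funext => x; rewrite /WI /W cImM cReB cImB; ring.
rewrite WIE; split; first exact: (RintegrableB mS (RintegrableD mS iEi iEr) ilh).
rewrite (RintegralB mS (RintegrableD mS iEi iEr) ilh) (RintegralD mS iEi iEr).
rewrite -Euh (RintegralD mS iri iir).
have -> : M * δ *+ 4 * fine (mu S) = M * δ *+ 2 * fine (mu S) + M * δ *+ 2 * fine (mu S).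
  by ring.
rewrite (_ : forall p q r s : R, p + q - (r + s) = (p - r) + (q - s)); last by move=> *; ring.
by rewrite (le_trans (ler_normD _ _)) // lerD.
Qed.


(* On [piece n M m s i j], [E|u|] and [E(u)] are bounded by [M], [h] lies in
   a grid cell of side [mesh M m], and the coordinate of [W] selected by [s]
   keeps a sign and stays [step m] away from 0; [mesh] makes [4 M mesh < step],
   which is what forces each piece to be null. *)
Let step (m : nat) : R := (m.+1%:R)^-1.
Let mesh (M m : nat) : R := step m / (4 * M%:R + 1).
Let grid (M m i : nat) : R := - M%:R + i%:R * mesh M m.
Let cell (M m i : nat) (y : R) : bool := grid M m i <= y <= grid M m i + mesh M m.
Let signed_away (m s : nat) x : bool :=
  match s with
  | 0 => step m <= WR x | 1 => WR x <= - step m | 2 => step m <= WI x | _ => WI x <= - step m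
  end.
Let in_piece (M m s i j : nat) x : bool :=
  [&& (kk x <= M%:R%:E)%E, `|ER x| <= M%:R, `|EI x| <= M%:R,
      cell M m i (hr x) && cell M m j (hi x) & signed_away m s x].
Let piece n M m s i j := F n `&` [set x | in_piece M m s i j x].

Lemma piece_calA n M m s i j : calA (piece n M m s i j).
Proof.
have [_ /(Ameasurable_eP calA_sigma) mk _] := kk_cexp.
have [mER mEI] := Eu_measurable; have [mhr mhi] := h_measurable.
have [mWR mWI] := W_measurable.
have mle (p q : XA -> R) := @measurable_fun_ler _ XA R setT p q.
have mc (r : R) := @measurable_cst _ _ XA R setT r.
have mn (p : XA -> R) (mp : measurable_fun setT p) :=
  measurableT_comp (@normr_measurable R setT) mp.
rewrite -(gmeasurableE calA_sigma); apply: measurableI; first by rewrite gmeasurableE.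
apply: measurable_set_bool; rewrite /in_piece /cell; repeat apply: measurable_and.
- exact: measurable_fun_lee mk (measurable_cst _).
- exact: mle (mn _ mER) (mc _).
- exact: mle (mn _ mEI) (mc _).
- exact: mle (mc _) mhr.
- exact: mle mhr (mc _).
- exact: mle (mc _) mhi.
- exact: mle mhi (mc _).
- by case: s => [|[|[|s]]]; [exact: mle (mc _) mWR|exact: mle mWR (mc _)|
    exact: mle (mc _) mWI|exact: mle mWI (mc _)].
Qed.

Lemma piece_null n M m s i j : mu (piece n M m s i j) = 0%E.
Proof.
set S := piece n M m s i j; have AS : calA S := piece_calA n M m s i j.
have mS := calA_sub AS.
have fS : (mu S < +oo)%E.
  apply: le_lt_trans (finite_F n); apply: le_measure; rewrite ?inE //.
  - exact: calA_sub (calA_F n).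
  - exact: subIsetl.
have step0 : 0 < step m by rewrite invr_gt0.
have mesh0 : 0 < mesh M m by rewrite divr_gt0 //; lra.
have cellP k y : cell M m k y -> `|y - grid M m k| <= mesh M m.
  by move=> /andP[h1 h2]; rewrite ler_norml; apply/andP; split; lra.
have box : in_box S M%:R (mesh M m) (grid M m i) (grid M m j).
  by move=> x [_ /and5P[k1 k2 k3 /andP[/cellP c1 /cellP c2] _]].
have sgn x : S x -> signed_away m s x by move=> [_ /and5P[]].
have [iWR bWR] := Rintegral_WR_small AS fS (ltW mesh0) box.
have [iWI bWI] := Rintegral_WI_small AS fS (ltW mesh0) box.
have e0 : 0 <= M%:R * mesh M m *+ 4 by rewrite mulrn_wge0 // mulr_ge0 // ltW.
have ec := mulrn4_div_lt step0 (ler0n R M).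
clearbody S; case: s sgn => [|[|[|s]]] sgn.
- by apply: (measure0_of_Rintegral_small mS fS e0 ec iWR bWR); left.
- by apply: (measure0_of_Rintegral_small mS fS e0 ec iWR bWR); right.
- by apply: (measure0_of_Rintegral_small mS fS e0 ec iWI bWI); left.
- by apply: (measure0_of_Rintegral_small mS fS e0 ec iWI bWI); right.
Qed.


Lemma piece_cover x : h x != 0 -> Eu x != lam -> (kk x < +oo)%E ->
  exists n M m s i j, piece n M m s i j x.
Proof.
move=> hx Ex kx; have [n _ Fx] : (\bigcup_n F n) x by rewrite cover_F.
have [k0 _ _] := kk_cexp.
have kfx : kk x = (fine (kk x))%:E by rewrite fineK // ge0_fin_numE // k0.
pose T := fine (kk x) + `|ER x| + `|EI x| + `|hr x| + `|hi x|.
pose M := (Num.truncn T).+1.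
have [kM ERM EIM hrM hiM] : [/\ fine (kk x) <= M%:R, `|ER x| <= M%:R, `|EI x| <= M%:R,
    `|hr x| <= M%:R & `|hi x| <= M%:R].
  have TM : T < M%:R := real_truncnS_gt (num_real T).
  have := fine_ge0 (k0 x); have := normr_ge0 (ER x); have := normr_ge0 (EI x).
  have := normr_ge0 (hr x); have := normr_ge0 (hi x); rewrite /T in TM; split; lra.
have [m [s sgn]] : exists m s, signed_away m s x.
  have W0 : W x != 0 by rewrite mulf_neq0 // subr_eq0.
  have [WR0|WR0] := eqVneq (WR x) 0; last first.
    by have [m [?|?]] := exists_inv_succ_le_norm WR0; [exists m, 0%N|exists m, 1%N].
  have WI0 : WI x != 0.
    by apply: contra W0 => /eqP WI0; apply/eqP; apply: complex_eq.
  by have [m [?|?]] := exists_inv_succ_le_norm WI0; [exists m, 2%N|exists m, 3%N].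
have cell_of y : `|y| <= M%:R -> exists k, cell M m k y.
  move=> yM; apply: exists_grid_cell; first by rewrite divr_gt0 ?invr_gt0 //; lra.
  by move: yM; rewrite ler_norml; lra.
have [i ci] := cell_of _ hrM; have [j cj] := cell_of _ hiM.
exists n, M, m, s, i, j; split => //; apply/and5P; split => //.
- by rewrite kfx lee_fin.
- by rewrite ci cj.
Qed.

Lemma level_set_gt0 : norm2sq mu f = 1%E -> (0 < mu (level_set Eu lam))%E.
Proof.
move=> f1; rewrite lt0e measure_ge0 andbT; apply/negP => /eqP L0.
have mL := calA_sub (level_set_calA calA_sigma lam Eu_cexp).
have nL : mu.-negligible (level_set Eu lam) by exists (level_set Eu lam); split.
have nP : mu.-negligible (\bigcup_n \bigcup_M \bigcup_m \bigcup_s \bigcup_i \bigcup_j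
    piece n M m s i j).
  apply: negligible_bigcup => n; apply: negligible_bigcup => M.
  apply: negligible_bigcup => m; apply: negligible_bigcup => s.
  apply: negligible_bigcup => i; apply: negligible_bigcup => j.
  exists (piece n M m s i j); split => //; last exact: piece_null.
  exact: calA_sub (piece_calA n M m s i j).
have nh : mu.-negligible [set x | h x != 0].
  apply: negligibleS (negligibleU nL (negligibleU kk_fin nP)) => x /= hx.
  have [Ex|Ex] := eqVneq (Eu x) lam; [by left|right].
  have [kx|kx] := boolP (kk x < +oo)%E; [right|by left].
  have [n [M [m [s [i [j Px]]]]]] := piece_cover hx Ex kx.
  by exists n => //; exists M => //; exists m => //; exists s => //; exists i => //; exists j.
have h0 : {ae mu, forall x, h x = 0} by apply: negligibleS nh => x /= /eqP.
have : norm2sq mu f = 0%E.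
  have [mfr mfi] := mf.
  have mcsq : measurable_fun setT (fun x => (csq (f x))%:E).
    by apply/measurable_EFinP; apply: measurable_funD; exact: measurable_funX.
  have csq0 : ae_eq mu setT (fun x => (csq (f x))%:E) (cst 0%E).
    apply: filterS2 f_ae_h h0 => x fh hx0 _.
    by rewrite fh hx0 /csq /= expr0n /= addr0.
  by rewrite /norm2sq (ae_eq_integral _ _ measurableT mcsq (measurable_cst _) csq0) integral0.
by rewrite f1 => /eqP; rewrite onee_eq0.
Qed.

End eigenvalue_level_set.

Unset Implicit Arguments. Set Strict Implicit.

Theorem theorem3p1 (d : measure_display) (X : measurableType d) (R : realType)
  (mu : {measure set X -> \bar R}) (calA : set (set X)) (u Eu : X -> R[i]) :
  measure_is_complete mu ->
  sigma_finite setT mu ->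
  sub_sigma_finite_algebra mu calA ->
  in_DE mu calA u ->
  EMu_bounded mu calA u ->
  cexp mu calA u Eu ->
  [/\ point_spectrum mu calA u `\ (0 : R[i]) =
        [set lam : R[i] | lam != 0 /\ (0 < mu (level_set Eu lam))%E],
      [set lam : R[i] | (0 < mu (level_set Eu lam))%E] `<=` point_spectrum mu calA u &
      (0 < mu (level_set Eu (0%R : R[i])))%E ->
        [set lam : R[i] | (0 < mu (level_set Eu lam))%E] = point_spectrum mu calA u].
Proof.
move=> _ _ calA_ssf [mu_ [kk [kk_cexp kk_fin]]] _ Eu_cexp.
have [calA_sigma calA_sub [F [calA_F cover_F]]] := calA_ssf.
have level_sub : [set lam | (0 < mu (level_set Eu lam))%E] `<=` point_spectrum mu calA u.
  by move=> lam; exact: level_set_point_spectrum.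
have eigen_level lam : lam != 0 -> point_spectrum mu calA u lam ->
    (0 < mu (level_set Eu lam))%E.
  move=> lam0 [f [[mf _] f1 [G [G_cexp G_ae]]]].
  exact: (level_set_gt0 calA_sigma calA_sub mu_ kk_cexp Eu_cexp lam0 mf G_cexp G_ae kk_fin
    (fun n => (calA_F n).1) (fun n => (calA_F n).2) cover_F f1).
split => //.
- apply/seteqP; split => lam /=.
    by move=> [ps /eqP lam0]; split => //; exact: eigen_level.
  by move=> [lam0 L]; split; [exact: level_sub|exact/eqP].
- move=> L0; apply/seteqP; split => // lam ps.
  by have [->|lam0] := eqVneq lam 0; [|exact: eigen_level].
Qed.
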